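(* For all integers $N\ge2$ and all $x\neq y$, $$\sum_{2\le a+b\le N}s(N,a+b)\,x^ay^b=\frac{y\,x(x-1)\cdots(x-N+1)-x\,y(y-1)\cdots(y-N+1)}{x-y},$$ and for $M=0,1,\dots,N-1$, $$\sum_{2\le a+b\le N}s(N,a+b)\,M^{a+b-1}=(-1)^{N-M-1}M!\,(N-M-1)!,$$ where both sums run over all integers $a,b\ge1$ with $2\le a+b\le N$.
   Context: $s(n,k)$ denote the Stirling numbers of the first kind, defined by $\sum_{k=0}^n s(n,k)x^k=x(x-1)\cdots(x-n+1)$. *)

From HB Require Import structures.
From mathcomp Require Import all_boot all_order all_algebra.
Set Implicit Arguments. Unset Strict Implicit. Unset Printing Implicit Defensive.
Import Order.TTheory GRing.Theory Num.Theory.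
Local Open Scope ring_scope.

Definition stirling1 (n k : nat) : int :=
  (\prod_(i < n) ('X - (i%:Z)%:P))`_k.

From HB Require Import structures.
From mathcomp Require Import all_boot all_order all_algebra zify ring.
Import Order.TTheory GRing.Theory Num.Theory.
Local Open Scope ring_scope.

(* Grouping the double sum by k = a + b, the inner sum over a + b = k is the
   k-th "mixed power sum" of x and y, and (x - y) times it is y x^k - x y^k;
   summing against s(N,k) gives y P(x) - x P(y) for P(X) = X(X-1)...(X-N+1).
   At an integer root 0 < M < N of P, the second sum is
   sum_k s(N,k) (k-1) M^(k-1) = P'(M) - P(M)/M = P'(M), the product of the
   M - i over i <> M. *)

Lemma big_ord_cond_nat (R : Type) (idx : R) (op : Monoid.law idx) n k (F : nat -> R) :
  (k <= n)%N -> \big[op/idx]_(a < n | (1 <= a < k)%N) F a = \big[op/idx]_(1 <= a < k) F a.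
Proof.
move=> le_kn; rewrite (big_nat_widen _ _ _ _ _ le_kn) (@big_nat_widenl _ _ _ 1 0) //.
by rewrite big_mkord; apply: eq_bigl => a; lia.
Qed.

Lemma sum_pairs_by_total (V : nmodType) n (G : nat -> nat -> V) :
  \sum_(a < n.+1) \sum_(b < n.+1 | [&& (1 <= a)%N, (1 <= b)%N & (2 <= a + b <= n)%N]) G a b
  = \sum_(k < n.+1) \sum_(1 <= a < k) G a (k - a)%N.
Proof.
rewrite [RHS](eq_bigr (fun k : 'I_n.+1 => \sum_(a < n.+1 | (1 <= a < k)%N) G a (k - a)%N));
  last by move=> k _; rewrite (@big_ord_cond_nat _ _ _ n.+1 k (fun a => G a (k - a)%N)) // ltnW.
rewrite pair_big_dep [RHS]pair_big_dep /=.
rewrite (reindex_onto (fun p : 'I_n.+1 * 'I_n.+1 => (p.2, inord (p.1 - p.2)))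
                      (fun p : 'I_n.+1 * 'I_n.+1 => (inord (p.1 + p.2), p.1))) /=.
  apply: eq_big => [[k a]|[k a]] /=; have lt_kn := ltn_ord k.
    rewrite inordK; last lia.
    case: (leqP a k) => le_ak.
      rewrite (subnKC le_ak) inord_val eqxx andbT.
      by apply/idP/idP => [/and4P|/andP] => [[]|[]]; lia.
    rewrite (_ : (k - a = 0)%N) ?andbF; last lia.
    apply/esym/negbTE/negP => /andP[]; lia.
  by move=> /andP[_ _]; rewrite inordK //; lia.
move=> [a b] /= /and4P[_ _ _ le_abn].
have inord_ab : (inord (a + b) : 'I_n.+1) = (a + b)%N :> nat by rewrite inordK.
by rewrite inord_ab addKn inord_val.
Qed.

Lemma subr_mul_sum_mixed_powers (R : comNzRingType) (x y : R) k : (0 < k)%N ->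
  (x - y) * \sum_(1 <= a < k) x ^+ a * y ^+ (k - a) = y * x ^+ k - x * y ^+ k.
Proof.
elim: k => // -[_ _|k IHk _]; first by rewrite big_geq // mulr0 mulrC subrr.
rewrite big_nat_recr //= subSnn.
have -> : \sum_(1 <= a < k.+1) x ^+ a * y ^+ (k.+2 - a)
          = y * \sum_(1 <= a < k.+1) x ^+ a * y ^+ (k.+1 - a).
  rewrite big_distrr; apply: eq_big_nat => a /andP[_ ltak].
  by rewrite (subSn (ltnW ltak)) exprS mulrCA.
by rewrite mulrDr mulrCA IHk // !exprS; ring.
Qed.

Lemma size_prod_ord_XsubC (R : nzRingType) n (F : 'I_n -> R) :
  size (\prod_(i < n) ('X - (F i)%:P)) = n.+1.
Proof. by rewrite size_prod_XsubC /index_enum unlock -enumT size_enum_ord. Qed.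

Lemma horner_deriv_nonzero_root (R : idomainType) (p : {poly R}) (x : R) n :
  (size p <= n.+1)%N -> p`_0 = 0 -> root p x -> x != 0 ->
  p^`().[x] = \sum_(k < n.+1) p`_k * x ^+ (k - 1) *+ (k - 1).
Proof.
move=> size_p p0 /rootP px0 x_neq0.
set S := \sum_(i < n) p`_i.+1 * x ^+ i.
have S0 : S = 0.
  apply/(mulIf x_neq0); rewrite mul0r -px0 (horner_coef_wide _ size_p) big_ord_recl p0.
  by rewrite mul0r add0r big_distrl; apply: eq_bigr => i _; rewrite exprSr mulrA.
have size_dp : (size p^`() <= n)%N.
  by rewrite (leq_trans (size_poly _ _)) // -subn1 leq_subLR add1n.
rewrite (horner_coef_wide _ size_dp) big_ord_recl mulr0n add0r.
transitivity (\sum_(i < n) p`_i.+1 * x ^+ i *+ i + S).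
  by rewrite -big_split; apply: eq_bigr => i _; rewrite coef_deriv mulrnAl mulrSr.
by rewrite S0 addr0; apply: eq_bigr => i _; rewrite /= subn1.
Qed.

Lemma deriv_prod_XsubC_at (R : comNzRingType) (I : finType) (F : I -> R) (j : I) :
  (\prod_i ('X - (F i)%:P))^`().[F j] = \prod_(i | i != j) (F j - F i).
Proof.
rewrite (bigD1 j) //= derivM derivXsubC mul1r hornerD hornerM hornerXsubC subrr.
rewrite mul0r addr0 horner_prod; apply: eq_bigr => i _.
by rewrite hornerXsubC.
Qed.

Lemma prod_ord_succ k : \prod_(i < k) (i.+1)%:Z = (k`!)%:Z.
Proof. by elim: k => [|k IHk]; rewrite ?big_ord0 // big_ord_recr /= IHk factS PoszM mulrC. Qed.

Lemma prod_sub_ord_neq n (j : 'I_n) :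
  \prod_(i < n | i != j) (j%:Z - i%:Z)
  = (-1) ^+ (n - j - 1) * (j`!)%:Z * ((n - j - 1)`!)%:Z.
Proof.
have lt_jn := ltn_ord j.
rewrite (eq_bigl (fun i : 'I_n => (i : nat) != j)) // big_mkcond /=.
rewrite -(big_mkord xpredT (fun i => if i != j then j%:Z - i%:Z else 1)).
rewrite (big_cat_nat _ (n := j)) //=; last exact: ltnW.
rewrite [X in _ * X]big_ltn //= eqxx mul1r [RHS]mulrAC [RHS]mulrC; congr (_ * _).
  rewrite -prod_ord_succ -(big_mkord xpredT (fun i => (i.+1)%:Z)) big_nat_rev.
  apply: eq_big_nat => i /andP[_ lt_ij].
  by rewrite ifT; lia.
have prodN k : \prod_(i < k) - (i.+1)%:Z = (-1) ^+ k * (k`!)%:Z.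
  by rewrite prodrN card_ord prod_ord_succ.
rewrite subn1 -subnS -prodN -{1}[j.+1]add0n big_addn big_mkord; apply: eq_bigr => i _.
by rewrite ifT; lia.
Qed.

Definition falling_poly n : {poly int} := \prod_(i < n) ('X - (i%:Z)%:P).

Lemma stirling1_n0 n : (0 < n)%N -> stirling1 n 0 = 0.
Proof.
case: n => // n _; rewrite /stirling1 -horner_coef0 horner_prod big_ord_recl.
by rewrite hornerXsubC subrr mul0r.
Qed.

Lemma root_falling_poly n m : (m < n)%N -> root (falling_poly n) m%:Z.
Proof.
move=> lt_mn; rewrite /root horner_prod (bigD1 (Ordinal lt_mn)) //=.
by rewrite hornerXsubC subrr mul0r.
Qed.

Lemma falling_factorial_stirling1 (R : comNzRingType) n (x : R) :
  \prod_(i < n) (x - i%:R) = \sum_(k < n.+1) (stirling1 n k)%:~R * x ^+ k.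
Proof.
have -> : \prod_(i < n) (x - i%:R) = (map_poly intr (falling_poly n)).[x].
  by rewrite map_prod_XsubC horner_prod; apply: eq_bigr => i _; rewrite hornerXsubC.
rewrite (horner_coef_wide _ (n := n.+1)); last by rewrite map_prod_XsubC size_prod_ord_XsubC.
by apply: eq_bigr => k _; rewrite coef_map.
Qed.

Lemma sum_stirling1_pairs_mul_subr (R : comNzRingType) n (x y : R) : (0 < n)%N ->
  (x - y) * \sum_(a < n.+1)
    \sum_(b < n.+1 | [&& (1 <= a)%N, (1 <= b)%N & (2 <= a + b <= n)%N])
      (stirling1 n (a + b))%:~R * x ^+ a * y ^+ b
  = y * \prod_(i < n) (x - i%:R) - x * \prod_(i < n) (y - i%:R).
Proof.
move=> n_gt0.
rewrite (@sum_pairs_by_total _ n (fun a b => (stirling1 n (a + b))%:~R * x ^+ a * y ^+ b)).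
rewrite !falling_factorial_stirling1 !big_distrr -sumrB /=; apply: eq_bigr => k _.
have [->|k_gt0] := posnP k; first by rewrite big_geq // stirling1_n0 // mulr0; ring.
under eq_big_nat => a /andP[_ lt_ak] do rewrite subnKC ?(ltnW lt_ak) // -mulrA.
by rewrite -big_distrr /= mulrCA subr_mul_sum_mixed_powers //; ring.
Qed.

Lemma sum_stirling1_pairs_at_root n m : (0 < m < n)%N ->
  \sum_(a < n.+1) \sum_(b < n.+1 | [&& (1 <= a)%N, (1 <= b)%N & (2 <= a + b <= n)%N])
     stirling1 n (a + b) * (m%:Z) ^+ (a + b - 1)
  = (-1) ^+ (n - m - 1) * (m`!)%:Z * ((n - m - 1)`!)%:Z.
Proof.
case/andP=> m_gt0 lt_mn.
rewrite (@sum_pairs_by_total _ n (fun a b => stirling1 n (a + b) * m%:Z ^+ (a + b - 1))).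
transitivity (\sum_(k < n.+1) (falling_poly n)`_k * m%:Z ^+ (k - 1) *+ (k - 1)).
  apply: eq_bigr => k _; rewrite -sumr_const_nat.
  by apply: eq_big_nat => a /andP[_ lt_ak]; rewrite subnKC // ltnW.
rewrite -horner_deriv_nonzero_root ?size_prod_ord_XsubC ?root_falling_poly //.
- by rewrite (@deriv_prod_XsubC_at _ _ (fun i : 'I_n => i%:Z) (Ordinal lt_mn)) prod_sub_ord_neq.
- exact: stirling1_n0 (leq_trans m_gt0 (ltnW lt_mn)).
- by rewrite eqz_nat -lt0n.
Qed.

Theorem lemma2p3 (R : fieldType) (N : nat) (hN : (2 <= N)%N) :
  (forall x y : R, x != y ->
     \sum_(a < N.+1) \sum_(b < N.+1 | [&& (1 <= a)%N, (1 <= b)%N & (2 <= a + b <= N)%N])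
        (stirling1 N (a + b))%:~R * x ^+ a * y ^+ b
     = (y * \prod_(i < N) (x - i%:R) - x * \prod_(i < N) (y - i%:R)) / (x - y))
  /\
  (forall M : nat, (1 <= M)%N -> (M <= N - 1)%N ->
     \sum_(a < N.+1) \sum_(b < N.+1 | [&& (1 <= a)%N, (1 <= b)%N & (2 <= a + b <= N)%N])
        stirling1 N (a + b) * (M%:Z) ^+ (a + b - 1)
     = (-1) ^+ (N - M - 1) * (M`!)%:Z * ((N - M - 1)`!)%:Z).
Proof.
split=> [x y neq_xy | M M_gt0 M_le]; last by rewrite sum_stirling1_pairs_at_root //; lia.
have neq0_xy : x - y != 0 by rewrite subr_eq0.
by apply: (mulIf neq0_xy); rewrite divfK // mulrC sum_stirling1_pairs_mul_subr // ltnW.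
Qed.
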